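(* Let $\mathbf{X}$ be a finite tournament isomorphic to an induced subtournament of $\mathbf{S}(2)$. Then every extension of $\mathbf{X}$ in $\mathcal{P}_2$ embeds into every extension of $\mathbf{S}(2)$.
   Context: $\mathbf{S}(2)$ is the tournament whose vertices are the points of the unit circle of $\mathbb{C}$ with rational argument, with an arc from $x$ to $y$ iff $0<\arg(y/x)<\pi$. For a structure $\mathbf{A}=(A,<^{\mathbf{A}},P_1,P_2)$ with $<^{\mathbf{A}}$ a linear order on $A$ and $(P_1,P_2)$ a partition of $A$, writing $a\sim b$ when $a,b$ lie in the same part, $p(\mathbf{A})$ is the tournament on $A$ with an arc from $a$ to $b$ iff either ($a\sim b$ and $a<^{\mathbf{A}}b$) or ($a\not\sim b$ and $b<^{\mathbf{A}}a$). An extension of a tournament $\mathbf{X}$ is any such $\mathbf{A}$ with $p(\mathbf{A})=\mathbf{X}$; $\mathcal{P}_2$ is the class of finite such structures. In particular an extension of $\mathbf{S}(2)$ is a structure $(\mathbf{S}(2),<,B_1,B_2)$ with $p$ of it equal to $\mathbf{S}(2)$. An embedding is an order-preserving injection mapping $P_i$ into $B_i$ and the complement of $P_i$ into the complement of $B_i$. *)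

From Stdlib Require Import Reals QArith Qcanon Qreals.
From mathcomp Require Import all_boot.

Open Scope R_scope.

(** Vertices of S(2): points e^{i q} of the unit circle whose argument q
    (taken in [0, 2*PI)) is rational.  A point is identified with its
    argument; Qc gives canonical rationals, so distinct vertices are
    distinct points. *)
Definition S2vertex : Type := {q : Qc | 0 <= Q2R q < 2 * PI}.

Definition angle (x : S2vertex) : R := Q2R (proj1_sig x).

Definition arg_quot (x y : S2vertex) : R :=
  let d := angle y - angle x in
  if Rle_dec 0 d then d else d + 2 * PI.

Definition S2arc (x y : S2vertex) : Prop := 0 < arg_quot x y < PI.

Close Scope R_scope.

Definition is_tournament {V : Type} (arc : V -> V -> Prop) : Prop :=
  (forall x, ~ arc x x) /\
  (forall x y, x <> y -> arc x y \/ arc y x) /\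
  (forall x y, arc x y -> ~ arc y x).

Definition strict_linear_order {V : Type} (lt : V -> V -> Prop) : Prop :=
  (forall x, ~ lt x x) /\
  (forall x y z, lt x y -> lt y z -> lt x z) /\
  (forall x y, x <> y -> lt x y \/ lt y x).

(** The tournament p(A) for A = (V, lt, P1, P2), where the partition
    (P1, P2) is encoded by the predicate P1 : V -> bool
    (P1 = [x | P1 x], P2 = [x | ~~ P1 x]). *)
Definition p_arc {V : Type} (lt : V -> V -> Prop) (P1 : V -> bool)
  (a b : V) : Prop :=
  (P1 a = P1 b /\ lt a b) \/ (P1 a <> P1 b /\ lt b a).

Definition is_extension {V : Type} (arc : V -> V -> Prop)
  (lt : V -> V -> Prop) (P1 : V -> bool) : Prop :=
  strict_linear_order lt /\ (forall a b, arc a b <-> p_arc lt P1 a b).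

Definition embeds {U V : Type} (ltU : U -> U -> Prop) (P1U : U -> bool)
  (ltV : V -> V -> Prop) (P1V : V -> bool) : Prop :=
  exists f : U -> V,
    injective f /\
    (forall a b, ltU a b -> ltV (f a) (f b)) /\
    (forall a, P1V (f a) = P1U a).

From Stdlib Require Import Reals QArith Qcanon Qreals Lra.
From mathcomp Require Import all_boot.
From mathcomp Require Import boolp.

(* The rational points are dense on the circle, so in S(2) any two vertices
   x -> y admit a vertex v with any prescribed directions of the arcs between
   v and x and between v and y.  In an extension (S(2), <, B1, B2) the arc
   relations of v to u and to w fix its position with respect to u and w once
   its colour is known; choosing them suitably yields, between any u < w,
   vertices of both colours.  A finite 2-coloured linear order is then embedded
   by choosing the images of its elements one after the other, in increasing
   order, inside a fixed interval (u0, w0). *)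

Local Open Scope R_scope.

Lemma exists_Qc_between (lo hi : R) : lo < hi -> exists q : Qc, lo < Q2R q < hi.
Proof.
move=> lt_lo_hi.
have [n_gt _] := archimed (/ (hi - lo)); set n := up _ in n_gt.
have inv_gt0 : 0 < / (hi - lo) by apply: Rinv_0_lt_compat; lra.
have n_gt0 : (0 < n)%Z by apply: lt_0_IZR; lra.
have gap : 1 < IZR n * (hi - lo).
  rewrite -(Rinv_l (hi - lo)); last lra.
  by apply: Rmult_lt_compat_r; lra.
have [m_gt m_le] := archimed (lo * IZR n); set m := up _ in m_gt m_le.
(* [m / n] lies in (lo, hi) since [m - 1 <= lo * n < m] and [n * (hi - lo) > 1]. *)
exists (Q2Qc (m # Z.to_pos n)).
rewrite (Qeq_eqR _ _ (Qred_correct _)) /Q2R /= Z2Pos.id //.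
have IZR_n_gt0 : 0 < IZR n by apply: IZR_lt.
split; apply: (Rmult_lt_reg_r (IZR n)) => //; rewrite Rmult_assoc Rinv_l; lra.
Qed.

Lemma arg_quotE (x y : S2vertex) :
  0 <= arg_quot x y < 2 * PI /\
  (arg_quot x y = angle y - angle x \/ arg_quot x y = angle y - angle x + 2 * PI).
Proof.
have [x_ge0 x_lt] := proj2_sig x; have [y_ge0 y_lt] := proj2_sig y.
rewrite /arg_quot /angle; case: Rle_dec => /= d_sgn; lra.
Qed.

Lemma exists_angle_between (lo hi : R) :
  0 <= lo < hi -> hi <= 2 * PI -> exists v : S2vertex, lo < angle v < hi.
Proof.
move=> lo_bd hi_bd; have [q q_bd] := exists_Qc_between lo hi ltac:(lra).
have q_vertex : 0 <= Q2R q < 2 * PI by lra.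
by exists (exist _ q q_vertex).
Qed.

Lemma exists_arg_quot_between (x : S2vertex) (lo hi : R) :
  0 <= lo < hi -> hi <= 2 * PI -> exists v, lo < arg_quot x v < hi.
Proof.
move=> lo_bd hi_bd; have [x_ge0 x_lt] : 0 <= angle x < 2 * PI := proj2_sig x.
have [v v_bd] : exists v, angle x + lo - 2 * PI < angle v < angle x + hi - 2 * PI \/
                          angle x + lo < angle v < angle x + hi.
  have [wrap | no_wrap] := Rle_lt_dec (2 * PI) (angle x + lo).
  - have [v v_bd] := exists_angle_between (angle x + lo - 2 * PI) (angle x + hi - 2 * PI)
      ltac:(lra) ltac:(lra).
    by exists v; left.
  - have [v v_bd] := exists_angle_between (angle x + lo) (Rmin (angle x + hi) (2 * PI))
      ltac:(split; [lra | apply: Rmin_case; lra]) (Rmin_r _ _).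
    by exists v; right; have := Rmin_l (angle x + hi) (2 * PI); lra.
by exists v; have := arg_quotE x v; lra.
Qed.

Lemma S2arc_exists : exists x y : S2vertex, S2arc x y.
Proof.
have [PI_gt0 PI_gt1] := (PI_RGT_0, PI2_1).
have [x _] := exists_angle_between 0 1 ltac:(lra) ltac:(lra).
have [y xy] := exists_arg_quot_between x 0 PI ltac:(lra) ltac:(lra).
by exists x, y.
Qed.

Definition two_point_extension_property {V : Type} (arc : V -> V -> Prop) : Prop :=
  forall x y, arc x y -> forall p q : bool, exists v,
    (if p then arc x v else arc v x) /\ (if q then arc y v else arc v y).

Lemma S2_two_point_extension : two_point_extension_property S2arc.
Proof.
rewrite /two_point_extension_property /S2arc => x y xy p q.
have PI_gt0 := PI_RGT_0.
(* With [t = arg_quot x v] and [d = arg_quot x y], the arcs between v and x are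
   read off [t], those between v and y off [t - d] modulo [2 * PI]. *)
pose lo (p q : bool) := if p then (if q then arg_quot x y else 0)
           else (if q then PI else PI + arg_quot x y).
pose hi (p q : bool) := if p then (if q then PI else arg_quot x y)
           else (if q then PI + arg_quot x y else 2 * PI).
have [v v_bd] := exists_arg_quot_between x (lo p q) (hi p q)
  ltac:(by rewrite /lo /hi; case: p q => [] []; lra)
  ltac:(by rewrite /hi; case: p q => [] []; lra).
exists v; move: v_bd; rewrite /lo /hi.
have := arg_quotE x y; have := arg_quotE x v; have := arg_quotE y v.
have := arg_quotE v x; have := arg_quotE v y.
by case: p q => [] [] /=; lra.
Qed.

Local Close Scope R_scope.
Local Open Scope nat_scope.

Definition colored_dense {V : Type} (lt : V -> V -> Prop) (P : V -> bool) : Prop :=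
  forall u w b, lt u w -> exists v, lt u v /\ lt v w /\ P v = b.

Section Extension.

Context {V : Type} {arc lt : V -> V -> Prop} {P : V -> bool}.
Hypothesis ext : is_extension arc lt P.

Lemma ext_ltE a b : lt a b <-> if P a == P b then arc a b else arc b a.
Proof.
have [_ arcE] := ext.
case: eqP => [same | diff]; split.
- by move=> ab; apply/arcE; left.
- by case/arcE => [[] | [] /(_ same)].
- by move=> ab; apply/arcE; right; split=> // /esym.
- by case/arcE => [[/esym] | []].
Qed.

Lemma ext_comparable_of_arc a b : arc a b -> lt a b \/ lt b a.
Proof.
move=> ab; case Pab: (P a == P b); [left | right]; apply/ext_ltE.
  by rewrite Pab.
by rewrite eq_sym Pab.
Qed.

Lemma ext_above_of_arc u v b :
  (if P u == b then arc u v else arc v u) -> if P v == b then lt u v else lt v u.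
Proof.
have := ext_ltE u v; have := ext_ltE v u.
by case: (P u) (P v) b => [] [] [] /= [_ vu] [_ uv]; auto.
Qed.

Lemma ext_below_of_arc w v b :
  (if P w == b then arc v w else arc w v) -> if P v == b then lt v w else lt w v.
Proof.
have := ext_ltE v w; have := ext_ltE w v.
by case: (P w) (P v) b => [] [] [] /= [_ wv] [_ vw]; auto.
Qed.

Lemma ext_colored_dense : two_point_extension_property arc -> colored_dense lt P.
Proof.
have [[irr [trans _]] _] := ext.
move=> two_pt u w b uw.
have [v [above below]] : exists v,
    (if P u == b then arc u v else arc v u) /\ (if P w == b then arc v w else arc w v).
  have /ext_ltE := uw; case: ifP => _ arc_uw.
  - have [v [above below]] := two_pt u w arc_uw (P u == b) (P w != b).
    by rewrite if_neg in below; exists v.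
  - have [v [below above]] := two_pt w u arc_uw (P w != b) (P u == b).
    by rewrite if_neg in below; exists v.
(* If v has the other colour, both comparisons flip: [w < v < u]. *)
move/ext_above_of_arc: above; move/ext_below_of_arc: below.
exists v; case: eqP above below => [// | _ vu wv].
by case: (irr u); apply: trans uw (trans _ _ _ wv vu).
Qed.

End Extension.

Lemma strict_mono_inj {U : eqType} {W : Type} {ltU : U -> U -> Prop}
    {ltW : W -> W -> Prop} {f : U -> W} :
  (forall a b, a <> b -> ltU a b \/ ltU b a) -> (forall y, ~ ltW y y) ->
  (forall a b, ltU a b -> ltW (f a) (f b)) -> injective f.
Proof.
move=> tot irr mono a b fab; case: (eqVneq a b) => // /eqP/tot [] /mono;
  by rewrite fab => /irr.
Qed.

Lemma exists_rank {T : finType} {lt : T -> T -> Prop} :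
  (forall x, ~ lt x x) -> (forall x y z, lt x y -> lt y z -> lt x z) ->
  exists r : T -> nat, forall a b, lt a b -> r a < r b.
Proof.
move=> irr trans; exists (fun x => #|[set y | `[< lt y x >]]|) => a b ab.
apply/proper_card/properP; split.
- by apply/subsetP => y; rewrite !inE => /asboolP ya; apply/asboolP/(trans _ _ _ ya ab).
- by exists a; rewrite !inE; [apply/asboolP | apply/asboolPn/irr].
Qed.

Lemma exists_factor_through_inj {T : finType} {U : eqType} {R : Type} {r : T -> U}
    (g : T -> R) (dflt : R) :
  injective r -> exists L : U -> R, forall x, L (r x) = g x.
Proof.
move=> r_inj; exists (fun u => if [pick x | r x == u] is Some x then g x else dflt) => x.
by case: pickP => [y /eqP/r_inj -> | /(_ x)]; rewrite ?eqxx.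
Qed.

Lemma increasing_colored_chain {V : Type} {lt : V -> V -> Prop} {P : V -> bool} (v0 : V) :
  (forall x y z, lt x y -> lt y z -> lt x z) ->
  (forall u b, exists v, lt u v /\ P v = b) ->
  forall L : nat -> bool,
    exists h : nat -> V, (forall k m, k < m -> lt (h k) (h m)) /\ forall k, P (h k) = L k.
Proof.
move=> trans next L.
have [nx nxP] : {nx : V * bool -> V & forall ub, lt ub.1 (nx ub) /\ P (nx ub) = ub.2}.
  by apply: (@choice _ _ (fun ub v => lt ub.1 v /\ P v = ub.2)) => ub; apply: next.
pose h := fix h k := nx (if k is k'.+1 then h k' else v0, L k).
exists h; split; last by case=> [|k]; exact: (nxP _).2.
by apply: homo_ltn => [y x z|k]; [exact: trans | exact: (nxP (h k, L k.+1)).1].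
Qed.

Lemma embeds_into_colored_dense (T : finType) (ltA : T -> T -> Prop) (P1A : T -> bool)
    (V : Type) (lt : V -> V -> Prop) (P : V -> bool) :
  strict_linear_order ltA -> strict_linear_order lt -> (exists u w, lt u w) ->
  colored_dense lt P -> embeds ltA P1A lt P.
Proof.
move=> [irrA [transA totA]] [irr [trans _]] [u0 [w0 u0w0]] dense.
have [r r_mono] := exists_rank irrA transA.
have nat_irr (k : nat) : ~ k < k by rewrite ltnn.
have r_inj := strict_mono_inj (ltW := fun m n => m < n) totA nat_irr r_mono.
have [L rL] := exists_factor_through_inj P1A true r_inj.
pose W := {v | lt v w0}.
have W_next (u : W) b : exists v : W, lt (sval u) (sval v) /\ P (sval v) = b.
  have [v [uv [vw0 Pv]]] := dense _ w0 b (svalP u).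
  by exists (exist _ v vw0).
have [h [h_mono hL]] := increasing_colored_chain (exist _ u0 u0w0)
  (fun x y z => trans (sval x) (sval y) (sval z)) W_next L.
have f_mono a b : ltA a b -> lt (sval (h (r a))) (sval (h (r b))) by move/r_mono/h_mono.
exists (fun a => sval (h (r a))); split; first exact: strict_mono_inj totA irr f_mono.
by split=> // a; rewrite hL rL.
Qed.

Theorem lemma5 (T : finType) (arcX : T -> T -> Prop) :
  is_tournament arcX ->
  (exists g : T -> S2vertex,
      injective g /\ (forall x y, arcX x y <-> S2arc (g x) (g y))) ->
  forall (ltA : T -> T -> Prop) (P1A : T -> bool),
    is_extension arcX ltA P1A ->
  forall (ltS : S2vertex -> S2vertex -> Prop) (B1 : S2vertex -> bool),
    is_extension S2arc ltS B1 ->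
  embeds ltA P1A ltS B1.
Proof.
move=> _ _ ltA P1A [ordA _] ltS B1 extS.
apply: embeds_into_colored_dense ordA extS.1 _ _.
- have [x [y xy]] := S2arc_exists.
  by case: (ext_comparable_of_arc extS x y xy) => ?; [exists x, y | exists y, x].
- exact: ext_colored_dense extS S2_two_point_extension.
Qed.
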